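(* A real Banach space $\mathbb{X}$ is a Hilbert space (i.e., its norm is induced by an inner product) if and only if for every $x\in S_{\mathbb{X}}$ and every $r>0$, $(x,x)$ is a CPP with CPP constant $(r,1)$.
   Context: $\mathbb{X}$ has dimension greater than $1$. $B(x,r)=\{u:\|u-x\|<r\}$. $x\perp_B y$ means $\|x+\lambda y\|\ge\|x\|$ for all real $\lambda$; $x^\perp=\{y:x\perp_By\}$. For $x,y\in S_{\mathbb{X}}$ and $r,\mu>0$, $(x,y)$ is a CPP with CPP constant $(r,\mu)$ if for all $z\in x^\perp\cap S_{\mathbb{X}}$, all $w\in y^\perp\cap S_{\mathbb{X}}$ and all $a,b\in\mathbb{R}$, $ax+bz\in B(x,r)\cap S_{\mathbb{X}}$ implies $\|ay+b\mu w\|\le1$. *)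

From HB Require Import structures.
From mathcomp Require Import all_boot all_order all_algebra.
From mathcomp Require Import all_classical all_reals all_analysis.
Set Implicit Arguments. Unset Strict Implicit. Unset Printing Implicit Defensive.
Import Order.TTheory GRing.Theory Num.Theory.
Import numFieldNormedType.Exports.
Local Open Scope ring_scope.

Section CPP.
Variables (R : realType) (V : normedModType R).

Definition BJorth (x y : V) : Prop := forall l : R, `|x| <= `|x + l *: y|.

Definition unit_sphere (x : V) : Prop := `|x| = 1.

Definition open_ball (x : V) (r : R) (u : V) : Prop := `|u - x| < r.

Definition is_CPP (x y : V) (r mu : R) : Prop :=
  [/\ unit_sphere x, unit_sphere y, 0 < r, 0 < mu &
  forall (z w : V) (a b : R),
    BJorth x z -> unit_sphere z -> BJorth y w -> unit_sphere w ->
    open_ball x r (a *: x + b *: z) -> unit_sphere (a *: x + b *: z) ->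
    `|a *: y + (b * mu) *: w| <= 1].

Definition is_inner_product_space : Prop :=
  exists ip : V -> V -> R,
    [/\ forall x y, ip x y = ip y x,
        forall a x y z, ip (a *: x + y) z = a * ip x z + ip y z &
        forall x, `|x| = Num.sqrt (ip x x)].

Definition dim_gt1 : Prop :=
  exists x y : V, forall a b : R, a *: x + b *: y = 0 -> a = 0 /\ b = 0.

End CPP.

From HB Require Import structures.
From mathcomp Require Import all_boot all_order all_algebra.
From mathcomp Require Import all_classical all_reals all_analysis.
From mathcomp Require Import ring lra.
Import Order.TTheory GRing.Theory Num.Theory.
Import numFieldNormedType.Exports.
Local Open Scope ring_scope.

(* Suppose every pair (x, x) is a CPP with constant (r, 1).  Applied at u/|u|
   with w = -v/|v|, this says that Birkhoff-James orthogonality u _|_ v forces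
   |u + v| = |u - v|; hence orthogonality is symmetric and t |-> |v + t u| is
   even whenever v _|_ u.  Such a function cannot also be even about a second
   point (it would be periodic, yet it grows linearly), so feet of
   perpendiculars are unique, and convexity then makes |v + t u| injective in
   |t|.  From this, |x| = |y| implies x + y _|_ x - y, and a computation with
   these reflections shows |s e1 + t e2|^2 = s^2 + t^2 for unit vectors
   e1 _|_ e2.  Any two vectors lie in the span of such a pair, so the
   parallelogram law holds and the polarization identity gives the inner
   product.  Conversely, in an inner product space _|_ is ordinary
   orthogonality and the CPP inequality is an equality. *)

Section BirkhoffJames.
Context {R : realType} {V : normedModType R}.
Implicit Types (e u v x y : V) (a b c p q s t : R).

Lemma BJorthZ {u v} s t : BJorth u v -> BJorth (s *: u) (t *: v).
Proof.
move=> uv l; have [->|s0] := eqVneq s 0; first by rewrite scale0r normr0.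
have -> : s *: u + l *: (t *: v) = s *: (u + (l * t / s) *: v).
  by rewrite scalerDr !scalerA; congr (_ + _ *: _); field.
by rewrite !normrZ ler_wpM2l.
Qed.

Lemma BJorthZl {u v} s : BJorth u v -> BJorth (s *: u) v.
Proof. by have := @BJorthZ u v s 1; rewrite scale1r. Qed.

Lemma BJorthZr {u v} t : BJorth u v -> BJorth u (t *: v).
Proof. by have := @BJorthZ u v 1 t; rewrite scale1r. Qed.

Lemma BJorthNr {u v} : BJorth u v -> BJorth u (- v).
Proof. by have := @BJorthZr u v (-1); rewrite scaleN1r. Qed.

Lemma BJorth0l v : BJorth 0 v.
Proof. by move=> l; rewrite normr0. Qed.

Lemma normalizeK v : v != 0 -> `|v| *: (`|v|^-1 *: v) = v.
Proof. by move=> v0; rewrite scalerA mulfV ?scale1r ?normr_eq0. Qed.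

Lemma exists_BJorth_on_line v {u} : u != 0 -> exists a, BJorth (v + a *: u) u.
Proof.
move=> u0; have nu : 0 < `|u| by rewrite normr_gt0.
(* Outside [-K, K] the norm exceeds |v|, so a minimiser on [-K, K] is global. *)
pose K := 2 * `|v| / `|u|.
have K0 : 0 <= K by rewrite divr_ge0 ?mulr_ge0.
have KK : - K <= K by lra.
have line_cont : continuous (fun a : R => `|v + a *: u|).
  move=> a; apply: (continuous_comp (f := fun a : R => v + a *: u)).
    by apply: continuousD; [exact: cst_continuous | exact: continuousZr_tmp].
  exact: norm_continuous.
have [c cK cmin] := EVT_min KK (continuous_subspaceT line_cont).
exists c => l; rewrite -addrA -scalerDl.
have [clK|] := boolP (c + l \in `[- K, K]); first exact: cmin.
rewrite in_itv /= -ler_norml -ltNge => Kcl.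
have : `|v + c *: u| <= `|v + 0 *: u| by apply: cmin; rewrite in_itv /=; lra.
rewrite scale0r addr0 => cd.
have : K * `|u| < `|c + l| * `|u| by rewrite ltr_pM2r.
have -> : K * `|u| = 2 * `|v| by rewrite /K divfK ?gt_eqF.
have := lerB_normD ((c + l) *: u) v; rewrite addrC normrZ; lra.
Qed.

Lemma BJorth_of_line_norm_eq {v u p q} : BJorth v u -> 0 <= p -> p < q ->
  `|v + p *: u| = `|v + q *: u| -> BJorth (v + q *: u) u.
Proof.
move=> vu p0 pq e; have q0 : 0 < q by lra.
pose th := p / q.
have th0 : 0 <= th by rewrite divr_ge0 // ltW.
have th1 : th < 1 by rewrite ltr_pdivrMr // mul1r.
have convex : v + p *: u = th *: (v + q *: u) + (1 - th) *: v.
  rewrite scalerDr scalerA divfK ?gt_eqF // scalerBl scale1r.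
  by rewrite addrAC [_ *: v + _]addrC subrK.
have : `|v + q *: u| <= `|v|.
  have := ler_normD (th *: (v + q *: u)) ((1 - th) *: v).
  rewrite -convex (normrZ th) (normrZ (1 - th)) e (ger0_norm th0).
  rewrite ger0_norm ?subr_ge0 ?(ltW th1) // => h.
  have : (1 - th) * `|v + q *: u| <= (1 - th) * `|v| by lra.
  by rewrite ler_pM2l // subr_gt0.
by move=> /le_trans qv l; rewrite -addrA -scalerDl; apply/qv/vu.
Qed.

Lemma line_norm_periodic v {u c} : u != 0 ->
  (forall t, `|v + (t + c) *: u| = `|v + t *: u|) -> c = 0.
Proof.
move=> u0 per; have [//|c0] := eqVneq c 0; exfalso.
have iter n : `|v + (n%:R * c) *: u| = `|v|.
  elim: n => [|n IH]; first by rewrite mul0r scale0r addr0.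
  by rewrite -[n.+1]addn1 natrD mulrDl mul1r per IH.
have cu : 0 < `|c| * `|u| by rewrite mulr_gt0 ?normr_gt0.
pose y := (2 * `|v| + 1) / (`|c| * `|u|).
have y0 : 0 <= y by rewrite divr_ge0 ?addr_ge0 ?mulr_ge0 // ltW.
have := archi_boundP y0; set n := Num.Def.archi_bound y => yn.
have : y * (`|c| * `|u|) < n%:R * (`|c| * `|u|) by rewrite ltr_pM2r.
rewrite divfK ?gt_eqF //.
have := lerB_normD ((n%:R * c) *: u) v.
by rewrite [_ + v]addrC iter normrZ normrM normr_nat mulrA; lra.
Qed.

Lemma dim_gt1_not_line e : dim_gt1 V -> exists y, forall a, y != a *: e.
Proof.
move=> [p [q pq]].
have p0 : p != 0.
  apply/eqP=> p0; have [] := pq 1 0; first by rewrite p0 scaler0 scale0r addr0.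
  by move/eqP; rewrite oner_eq0.
case: (pselect (exists a, p = a *: e)) => [[a pe]|]; last first.
  by move=> np; exists p => a; apply/eqP => pe; apply: np; exists a.
case: (pselect (exists b, q = b *: e)) => [[b qe]|]; last first.
  by move=> nq; exists q => b; apply/eqP => qe; apply: nq; exists b.
have [_ a0] : b = 0 /\ - a = 0.
  by apply: pq; rewrite pe qe !scalerA mulNr scaleNr mulrC subrr.
by move: p0; rewrite pe -[a]opprK a0 oppr0 scale0r eqxx.
Qed.

Definition comb e1 e2 s t : V := s *: e1 + t *: e2.

Lemma combD e1 e2 a b c d :
  comb e1 e2 a b + comb e1 e2 c d = comb e1 e2 (a + c) (b + d).
Proof. by rewrite /comb !scalerDl addrACA. Qed.

Lemma combZ e1 e2 k a b : k *: comb e1 e2 a b = comb e1 e2 (k * a) (k * b).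
Proof. by rewrite /comb scalerDr !scalerA. Qed.

Lemma combB e1 e2 a b c d :
  comb e1 e2 a b - comb e1 e2 c d = comb e1 e2 (a - c) (b - d).
Proof. by rewrite /comb opprD -!scaleNr addrACA -!scalerDl. Qed.

Definition polar x y := (`|x + y| ^+ 2 - `|x - y| ^+ 2) / 4.

Lemma polarC x y : polar x y = polar y x.
Proof. by rewrite /polar [y + x]addrC -[`|y - x|]normrN opprB. Qed.

End BirkhoffJames.

Section CPPNorm.
Context {R : realType} {V : normedModType R}.
Hypothesis cppV : forall (x : V) (r : R), unit_sphere x -> 0 < r -> is_CPP x x r 1.
Implicit Types (e u v w x y z : V) (a b c s t : R).

Lemma unit_BJorth_normB_le {x z} a b : unit_sphere x -> unit_sphere z ->
  BJorth x z -> `|a *: x + b *: z| = 1 -> `|a *: x - b *: z| <= 1.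
Proof.
move=> x1 z1 xz xz1.
(* Any radius above 2 would do: the combination lies on the unit sphere. *)
have [_ _ _ _ cpp] : is_CPP x x 3 1 by apply: cppV => //; lra.
have Nz1 : unit_sphere (- z) by rewrite /unit_sphere normrN.
move: (cpp z (- z) a b xz z1 (BJorthNr xz) Nz1); rewrite mulr1 scalerN; apply=> //.
by rewrite /open_ball (le_lt_trans (ler_normB _ _)) // xz1 x1; lra.
Qed.

Lemma BJorth_normB_le {u v} : BJorth u v -> `|u - v| <= `|u + v|.
Proof.
move=> uv; have [->|u0] := eqVneq u 0; first by rewrite sub0r add0r normrN.
have [->|v0] := eqVneq v 0; first by rewrite addr0 subr0.
have uv0 : u + v != 0.
  apply: contraNneq u0 => /eqP; rewrite addr_eq0 => /eqP vN.
  by have := uv 1; rewrite scale1r vN addNr normr0 normr_le0.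
pose T := `|u + v|; have T0 : 0 < T by rewrite normr_gt0.
pose x := `|u|^-1 *: u; pose z := `|v|^-1 *: v.
have xz : BJorth x z by apply: BJorthZ.
have e_plus : (`|u| / T) *: x + (`|v| / T) *: z = T^-1 *: (u + v).
  rewrite /x /z !scalerA scalerDr; congr (_ *: _ + _ *: _); field;
  by rewrite !normr_eq0 ?uv0 ?u0 ?v0.
have e_minus : (`|u| / T) *: x - (`|v| / T) *: z = T^-1 *: (u - v).
  rewrite /x /z !scalerA scalerDr scalerN; congr (_ *: _ - _ *: _); field;
  by rewrite !normr_eq0 ?uv0 ?u0 ?v0.
have := unit_BJorth_normB_le (`|u| / T) (`|v| / T) (normfZV u0) (normfZV v0) xz.
have TV : T^-1 * T = 1 by rewrite mulVf ?gt_eqF.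
rewrite e_plus e_minus !normrZ ger0_norm ?invr_ge0 ?(ltW T0) // -/T => /(_ TV).
by rewrite ler_pdivrMl // mulr1; apply.
Qed.

Lemma BJorth_normDZ {u v} s t : BJorth u v -> `|s *: u + t *: v| = `|s *: u - t *: v|.
Proof.
move=> /(BJorthZ s t) uv; apply/le_anti.
have := BJorth_normB_le (BJorthNr uv); rewrite opprK => ->.
by rewrite BJorth_normB_le.
Qed.

Lemma BJorth_sym {u v} : BJorth u v -> BJorth v u.
Proof.
move=> uv l; have := BJorth_normDZ l 1 uv; rewrite scale1r => e.
have := ler_normB (l *: u + v) (l *: u - v).
rewrite -e opprB addrC addrA addrNK -mulr2n normrMn mulr2n (addrC v); lra.
Qed.

Lemma BJorth_line_even {v u} t : BJorth v u -> `|v + t *: u| = `|v + (- t) *: u|.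
Proof. by move=> /(BJorth_normDZ 1 t); rewrite scale1r scaleNr. Qed.

Lemma BJorth_uniq {v u c} : u != 0 -> BJorth v u -> BJorth (v + c *: u) u -> c = 0.
Proof.
(* t |-> |v + t u| is symmetric about 0 and about c, hence 2c-periodic. *)
move=> u0 vu vcu; suff: c + c = 0 by lra.
apply: (line_norm_periodic v u0) => t.
have -> : t + (c + c) = c + (t + c) by ring.
rewrite scalerDl addrA (BJorth_line_even _ vcu) -addrA -scalerDl.
by rewrite [RHS](BJorth_line_even _ vu); congr (`|v + _ *: u|); ring.
Qed.

Lemma BJorth_line_norm_inj {v u s t} : u != 0 -> BJorth v u ->
  `|v + s *: u| = `|v + t *: u| -> `|s| = `|t|.
Proof.
move=> u0 vu; have line_abs r : `|v + `|r| *: u| = `|v + r *: u|.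
  by case: (ler0P r) => r0; rewrite ?ler0_norm -?BJorth_line_even ?ger0_norm.
wlog st : s t / `|s| <= `|t|.
  move=> gen e; have [/gen -> //|/ltW ts] := leP `|s| `|t|.
  exact/esym/gen/esym.
move=> e; apply/le_anti; rewrite st /= leNgt; apply/negP => lt.
rewrite -[LHS]line_abs -[RHS]line_abs in e.
have := BJorth_uniq u0 vu (BJorth_of_line_norm_eq vu (normr_ge0 s) lt e).
by move=> t0; move: lt; rewrite t0 ltNge normr_ge0.
Qed.

Lemma isosceles_BJorth {x y} : `|x| = `|y| -> BJorth (x + y) (x - y).
Proof.
move=> xy; have [->|u0] := eqVneq (x + y) 0; first exact: BJorth0l.
have [a vu] := exists_BJorth_on_line (x - y) u0.
suff a0 : a = 0 by apply: BJorth_sym; rewrite a0 scale0r addr0 in vu.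
have : `|1 - a| = `|1 + a|.
  apply: (BJorth_line_norm_inj u0 vu); rewrite [RHS](BJorth_line_even _ vu).
  have -> : x - y + a *: (x + y) + (1 - a) *: (x + y) = x *+ 2.
    by rewrite -addrA -scalerDl [a + _]addrC subrK scale1r addrACA addNr addr0 mulr2n.
  have -> : x - y + a *: (x + y) + (- (1 + a)) *: (x + y) = - y *+ 2.
    rewrite -addrA -scalerDl opprD addrA addrAC subrr sub0r scaleN1r opprD.
    by rewrite addrACA subrr add0r mulr2n.
  by rewrite !normrMn normrN xy.
by move/eqP; rewrite eqr_norm2 => /orP[] /eqP; lra.
Qed.

Section Orthonormal.
Variables e1 e2 : V.
Hypotheses (e1_unit : `|e1| = 1) (e2_unit : `|e2| = 1) (e12 : BJorth e1 e2).

Lemma comb_normNr s t : `|comb e1 e2 s (- t)| = `|comb e1 e2 s t|.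
Proof. by rewrite /comb scaleNr -(BJorth_normDZ s t e12). Qed.

Lemma comb_normC s t : `|comb e1 e2 t s| = `|comb e1 e2 s t|.
Proof.
have := isosceles_BJorth (etrans e1_unit (esym e2_unit)).
move=> /(BJorth_normDZ ((s + t) / 2) ((s - t) / 2)).
have -> : e1 + e2 = comb e1 e2 1 1 by rewrite /comb !scale1r.
have -> : e1 - e2 = comb e1 e2 1 (-1) by rewrite /comb scale1r scaleN1r.
rewrite !combZ combD combB => E.
by apply: etrans (etrans _ (esym E)) _; congr (`|comb _ _ _ _|); field.
Qed.

Lemma comb_norm_ge s t : `|s| <= `|comb e1 e2 s t|.
Proof. by have := BJorthZl s e12 t; rewrite normrZ e1_unit mulr1. Qed.

Lemma comb_unit_sqr s t : `|comb e1 e2 s t| = 1 -> s ^+ 2 + t ^+ 2 = 1.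
Proof.
move=> q1; have s1 : `|s| <= 1 by rewrite -q1 comb_norm_ge.
have [t0|t0] := eqVneq t 0.
  move: q1; rewrite t0 /comb scale0r addr0 normrZ e1_unit mulr1 => s_unit.
  by rewrite -real_normK ?num_real // s_unit expr1n expr0n addr0.
(* With q = s e1 + t e2, the reflection across e1 + q _|_ e1 - q maps
   e2 = (1 - s)/(2t) (e1 + q) - (1 + s)/(2t) (e1 - q) to t' e1 - s e2. *)
pose t' := (1 - s ^+ 2) / t.
have q'1 : `|comb e1 e2 s t'| = 1.
  have := isosceles_BJorth (etrans e1_unit (esym q1)).
  move=> /(BJorth_normDZ ((1 - s) / (2 * t)) (- (1 + s) / (2 * t))).
  have -> : e1 + comb e1 e2 s t = comb e1 e2 (1 + s) t.
    by rewrite /comb addrA scalerDl scale1r.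
  have -> : e1 - comb e1 e2 s t = comb e1 e2 (1 - s) (- t).
    by rewrite /comb opprD addrA scalerBl scale1r scaleNr.
  rewrite !combZ combD combB -comb_normC -comb_normNr => E.
  have e2_comb : `|comb e1 e2 0 1| = 1 by rewrite /comb scale0r add0r scale1r.
  apply: etrans (etrans (etrans _ (esym E)) _) e2_comb;
    by congr (`|comb _ _ _ _|); rewrite /t'; field.
have tt' : `|t| = `|t'|.
  have e20 : e2 != 0 by rewrite -normr_eq0 e2_unit oner_neq0.
  exact: (BJorth_line_norm_inj e20 (BJorthZl s e12) (etrans q1 (esym q'1))).
have tt'E : t * t' = 1 - s ^+ 2 by rewrite mulrC divfK.
have s2 : s ^+ 2 <= 1 by rewrite -real_normK ?num_real // expr_le1.
suff : t ^+ 2 = 1 - s ^+ 2 by lra.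
by rewrite -real_normK ?num_real // expr2 {2}tt' -normrM tt'E ger0_norm ?subr_ge0.
Qed.

Lemma comb_norm_sqr s t : `|comb e1 e2 s t| ^+ 2 = s ^+ 2 + t ^+ 2.
Proof.
set n := `|comb e1 e2 s t|.
have [n0|n0] := eqVneq n 0.
  have s0 : s = 0.
    by apply/normr0_eq0/le_anti; rewrite normr_ge0 andbT -n0 comb_norm_ge.
  have t0 : t = 0.
    by apply/normr0_eq0/le_anti; rewrite normr_ge0 andbT -n0 /n -comb_normC comb_norm_ge.
  by rewrite n0 s0 t0 expr0n addr0.
have := comb_unit_sqr (n^-1 * s) (n^-1 * t).
rewrite -combZ normrZ ger0_norm ?invr_ge0 ?normr_ge0 // -/n => /(_ (mulVf n0)).
rewrite !exprMn -mulrDr => h.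
by rewrite -[LHS]mulr1 -h mulrA -exprMn mulfV // expr1n mul1r.
Qed.

End Orthonormal.

Hypothesis dimV : dim_gt1 V.

Lemma BJorth_decomp {e} y : e != 0 -> exists a v, BJorth e v /\ y = a *: e + v.
Proof.
move=> e0; have [a ya] := exists_BJorth_on_line y e0.
exists (- a), (y + a *: e); split; first exact: BJorth_sym.
by rewrite addrCA scaleNr addNr addr0.
Qed.

Lemma exists_unit_BJorth {e} : e != 0 -> exists w, `|w| = 1 /\ BJorth e w.
Proof.
move=> e0; have [y yNe] := dim_gt1_not_line e dimV.
have [a [v [ev yv]]] := BJorth_decomp y e0.
have v0 : v != 0 by apply: contraNneq (yNe a) => v0; rewrite yv v0 addr0.
by exists (`|v|^-1 *: v); split; [exact: normfZV | exact: BJorthZr].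
Qed.

Lemma exists_unit : exists e : V, `|e| = 1.
Proof.
have [y y0] := dim_gt1_not_line 0 dimV.
by exists (`|y|^-1 *: y); apply: normfZV; rewrite -(scaler0 _ 0) y0.
Qed.

Lemma planar_euclidean x z : exists e1 e2 (x1 x2 z1 z2 : R),
  [/\ forall s t, `|comb e1 e2 s t| ^+ 2 = s ^+ 2 + t ^+ 2,
      x = comb e1 e2 x1 x2 & z = comb e1 e2 z1 z2].
Proof.
have [e1 [x1 [e1_unit ->]]] : exists e1 (x1 : R), `|e1| = 1 /\ x = x1 *: e1.
  have [->|x0] := eqVneq x 0.
    by have [e e_unit] := exists_unit; exists e, 0; rewrite scale0r.
  by exists (`|x|^-1 *: x), `|x|; rewrite normfZV // normalizeK.
have e10 : e1 != 0 by rewrite -normr_eq0 e1_unit oner_neq0.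
have [z1 [v [e1v ->]]] := BJorth_decomp z e10.
have [e2 [z2 [e2_unit e12 ->]]] :
    exists e2 (z2 : R), [/\ `|e2| = 1, BJorth e1 e2 & v = z2 *: e2].
  have [->|v0] := eqVneq v 0.
    have [e2 [e2_unit e12]] := exists_unit_BJorth e10.
    by exists e2, 0; rewrite scale0r.
  exists (`|v|^-1 *: v), `|v|; split; [exact: normfZV | exact: BJorthZr |].
  by rewrite normalizeK.
exists e1, e2, x1, 0, z1, z2; split => //.
  exact: comb_norm_sqr.
by rewrite /comb scale0r addr0.
Qed.

Lemma polarZl a x z : polar (a *: x) z = a * polar x z.
Proof.
have [e1 [e2 [x1 [x2 [z1 [z2 [euclid -> ->]]]]]]] := planar_euclidean x z.
by rewrite /polar combZ !combD !combB !euclid; field.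
Qed.

Lemma parallelogram x z :
  `|x + z| ^+ 2 + `|x - z| ^+ 2 = 2 * `|x| ^+ 2 + 2 * `|z| ^+ 2.
Proof.
have [e1 [e2 [x1 [x2 [z1 [z2 [euclid -> ->]]]]]]] := planar_euclidean x z.
by rewrite combD combB !euclid; ring.
Qed.

Lemma polarDl x y z : polar (x + y) z = polar x z + polar y z.
Proof.
have := parallelogram (x + z) (y + z); have := parallelogram (x - z) (y - z).
have -> : x + z + (y + z) = x + y + 2 *: z by rewrite addrACA scaler_nat mulr2n.
have -> : x + z - (y + z) = x - y by rewrite opprD addrACA subrr addr0.
have -> : x - z + (y - z) = x + y - 2 *: z by rewrite addrACA scaler_nat mulr2n opprD.
have -> : x - z - (y - z) = x - y by rewrite opprB addrA subrK.
have := polarZl 2 z (x + y); rewrite polarC [polar z _]polarC.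
rewrite /polar; lra.
Qed.

Lemma inner_product_of_CPP : is_inner_product_space V.
Proof.
exists polar; split => [|a x y z|x]; first exact: polarC.
  by rewrite polarDl polarZl.
rewrite /polar subrr normr0 expr0n /= subr0.
have -> : `|x + x| ^+ 2 / 4 = `|x| ^+ 2.
  by rewrite -mulr2n normrMn -mulr_natr; field.
by rewrite sqrtr_sqr normr_id.
Qed.

End CPPNorm.

Section InnerProduct.
Context {R : realType} {V : normedModType R}.
Variable ip : V -> V -> R.
Hypotheses (ipC : forall x y, ip x y = ip y x)
  (ip_linear : forall a x y z, ip (a *: x + y) z = a * ip x z + ip y z)
  (ip_norm : forall x, `|x| = Num.sqrt (ip x x)).
Implicit Types (x y z : V) (a b : R).

Lemma ip0l z : ip 0 z = 0.
Proof. by have := ip_linear 1 0 0 z; rewrite scaler0 addr0 mul1r; lra. Qed.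

Lemma ipZl a x z : ip (a *: x) z = a * ip x z.
Proof. by have := ip_linear a x 0 z; rewrite addr0 ip0l addr0. Qed.

Lemma ipDl x y z : ip (x + y) z = ip x z + ip y z.
Proof. by have := ip_linear 1 x y z; rewrite scale1r mul1r. Qed.

Lemma ip_normE x : `|x| ^+ 2 = ip x x.
Proof.
rewrite ip_norm sqr_sqrtr // leNgt; apply/negP => neg.
have /normr0_eq0 x0 : `|x| = 0 by rewrite ip_norm ltr0_sqrtr.
by move: neg; rewrite x0 ip0l ltxx.
Qed.

Lemma norm_combE a b x z :
  `|a *: x + b *: z| ^+ 2 = a ^+ 2 * ip x x + 2 * a * b * ip x z + b ^+ 2 * ip z z.
Proof.
rewrite ip_normE !ipDl !ipZl ipC [ip z _]ipC !ipDl !ipZl [ip z x]ipC; ring.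
Qed.

Lemma BJorth_ip0 {x z} : BJorth x z -> ip x z = 0.
Proof.
move=> xz; have [->|z0] := eqVneq z 0; first by rewrite ipC ip0l.
have zz : 0 < ip z z by rewrite -ip_normE exprn_gt0 ?normr_gt0.
pose l := - ip x z / ip z z.
have lzz : l * ip z z = - ip x z by rewrite divfK ?gt_eqF.
have := xz l; rewrite -(ler_pXn2r (_ : 0 < 2)%N) ?nnegrE //.
have := norm_combE 1 l x z; rewrite scale1r => -> ; rewrite ip_normE => h.
apply/eqP; rewrite -sqrf_eq0 eq_le sqr_ge0 andbT; nra.
Qed.

Lemma inner_product_CPP x (r : R) : unit_sphere x -> 0 < r -> is_CPP x x r 1.
Proof.
move=> x1 r0; split => // z w a b xz z1 xw w1 _ u1.
have := norm_combE a b x z; have := norm_combE a (b * 1) x w.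
rewrite (BJorth_ip0 xz) (BJorth_ip0 xw) -!ip_normE x1 z1 w1 u1 => e1 e2.
have := normr_ge0 (a *: x + (b * 1) *: w); nra.
Qed.

End InnerProduct.

Theorem mainTheorem20 (R : realType) (V : completeNormedModType R) :
  dim_gt1 V ->
  (is_inner_product_space V <->
   forall (x : V) (r : R), unit_sphere x -> 0 < r -> is_CPP x x r 1).
Proof.
move=> dimV; split => [[ip [ipC ip_linear ip_norm]]|cppV].
  exact: inner_product_CPP ipC ip_linear ip_norm.
exact: inner_product_of_CPP cppV dimV.
Qed.
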